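(* Let $M$ be a transversal matroid with presentation $\mathcal A=(A_1,\ldots,A_r)$. Let $i\in[r]$ and let $B_i\subseteq E(M)$ with $\mathrm{cl}^*(B_i)=\mathrm{cl}^*(A_i)$. Suppose further that for every $B\subseteq E(M)$ with $B_i\subseteq B$ and $A_i\not\subseteq B$, we have $r^*_M(B)<|B|-|\mathcal A(B)|$. Then $(A_1,\ldots,A_{i-1},B_i,A_{i+1},\ldots,A_r)$ is a presentation of $M$.
   Context: A presentation $\mathcal A$ of a transversal matroid $M$ means $M=M[\mathcal A]$, whose independent sets are the partial transversals of $\mathcal A$. $\mathrm{cl}^*$ and $r^*_M$ are the closure and rank functions of the dual $M^*$. For $X\subseteq E(M)$, $\mathcal A(X)=\{j\in[r]: A_j\subseteq X\}$. *)

From mathcomp Require Import all_boot.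
Set Implicit Arguments. Unset Strict Implicit. Unset Printing Implicit Defensive.

Section Transversal.
Variable E : finType.

Definition ptrans (r : nat) (A : 'I_r -> {set E}) (X : {set E}) : Prop :=
  exists f : E -> option 'I_r,
    (forall x, x \in X -> exists j, f x = Some j /\ x \in A j) /\
    {in X &, injective f}.

Definition is_presentation (indep : pred {set E}) (r : nat)
  (A : 'I_r -> {set E}) : Prop :=
  forall X : {set E}, indep X <-> ptrans A X.

Definition mrank (indep : pred {set E}) (X : {set E}) : nat :=
  \max_(Y : {set E} | (Y \subset X) && indep Y) #|Y|.

Definition dual_rank (indep : pred {set E}) (X : {set E}) : nat :=
  #|X| + mrank indep (~: X) - mrank indep setT.

Definition dual_cl (indep : pred {set E}) (X : {set E}) : {set E} :=
  [set e | dual_rank indep (e |: X) == dual_rank indep X].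

Definition contained_idx (r : nat) (A : 'I_r -> {set E}) (X : {set E})
  : {set 'I_r} := [set j | A j \subset X].

Definition replace_at (r : nat) (A : 'I_r -> {set E}) (i : 'I_r) (B : {set E})
  : 'I_r -> {set E} := fun j => if j == i then B else A j.

End Transversal.

(* Write A' for the family with A_i replaced by B_i and N(S) for the set of
   indices j with A_j meeting S.  If X is A-independent but not A'-transversal,
   match all of X but one element a in A' and search for an alternating path
   from a: it stops at some S with a in S, S a subset of X and |N_A'(S)| < |S|.
   Since S is A-independent, this forces S to miss B_i and to meet A_i, and the
   hypothesis for B = E - S, where r*(E - S) = |E - S| + r(S) - r(E), says
   |S| < |N_A(S)|, which is too many indices.  Conversely, if X is
   A'-transversal but A-dependent, the same search from the element b of B_i
   matched to i gives an A-dependent S within X - A_i with S - b independent, so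
   b is spanned by (E - A_i) - b; but b lies in cl*(B_i) = cl*(A_i), which
   makes b a coloop of M restricted to E - A_i. *)

From mathcomp Require Import all_boot zify.

Set Implicit Arguments. Unset Strict Implicit. Unset Printing Implicit Defensive.

Section MatroidRank.
Variables (E : finType) (indep : pred {set E}).
Implicit Types X Y I P Q : {set E}.

Lemma mrank_ge X Y : Y \subset X -> indep Y -> #|Y| <= mrank indep X.
Proof. by move=> YX iY; apply: leq_bigmax_cond; rewrite YX. Qed.

Lemma mrank_le X n :
  (forall Y, Y \subset X -> indep Y -> #|Y| <= n) -> mrank indep X <= n.
Proof. by move=> le_n; apply/bigmax_leqP => Y /andP[]; apply: le_n. Qed.

Lemma sub_dual_cl X : X \subset dual_cl indep X.
Proof. by apply/subsetP => x xX; rewrite inE (setUidPr _) ?sub1set. Qed.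

Hypothesis indep_sub : forall X Y, Y \subset X -> indep X -> indep Y.

Lemma mrankT_le X : mrank indep setT <= #|X| + mrank indep (~: X).
Proof.
apply: mrank_le => Y _ iY; rewrite -(cardsID X Y) leq_add //.
  exact/subset_leq_card/subsetIr.
by apply: mrank_ge (indep_sub (subsetDl _ _) iY); rewrite setDE subsetIr.
Qed.

Lemma dual_cl_mrankD1 X b : b \notin X -> b \in dual_cl indep X ->
  mrank indep (~: X :\ b) < mrank indep (~: X).
Proof.
move=> bX; rewrite inE /dual_rank cardsU1 bX setCU setIC -setDE => /eqP.
by have := mrankT_le X; lia.
Qed.

Hypothesis indep_augment : forall P Q, indep P -> indep Q -> #|Q| < #|P| ->
  exists2 x, x \in P :\: Q & indep (x |: Q).

Lemma indep_extend_mrank X I : indep I -> I \subset X ->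
  exists2 Q : {set E}, (I \subset Q) && (Q \subset X) & indep Q /\ #|Q| = mrank indep X.
Proof.
move=> iI IX; pose cand Q := [&& I \subset Q, Q \subset X & indep Q].
have candI : cand I by rewrite /cand subxx IX iI.
have [Q /and3P[IQ QX iQ] Qmax] := @arg_maxnP _ I cand (fun Q => #|Q|) candI.
exists Q; first by rewrite IQ QX.
split=> //; apply/eqP; rewrite eqn_leq mrank_ge //=.
apply: mrank_le => P PX iP; rewrite leqNgt; apply/negP => ltQP.
have [x /setDP[xP xQ] ixQ] := indep_augment iP iQ ltQP.
suff /Qmax : cand (x |: Q) by rewrite /= cardsU1 xQ add1n ltnn.
by rewrite /cand ixQ (subset_trans IQ (subsetUr _ _)) subUset sub1set (subsetP PX) ?QX.
Qed.

Lemma mrank_D1_spanned X I b : indep I -> I \subset X :\ b -> ~~ indep (b |: I) ->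
  mrank indep X <= mrank indep (X :\ b).
Proof.
move=> iI IXb dep_bI.
have [Q /andP[IQ QX] [iQ <-]] := indep_extend_mrank iI (subset_trans IXb (subD1set _ _)).
apply: (mrank_ge _ iQ); apply/subsetP => x xQ; rewrite in_setD1 (subsetP QX) // andbT.
apply: contraNneq dep_bI => xb; apply: indep_sub iQ.
by rewrite subUset sub1set -xb xQ.
Qed.

End MatroidRank.

Section Transversal.
Variables (E : finType) (r : nat).
Implicit Types (F G : 'I_r -> {set E}) (X Y Z S P Q : {set E}) (f g h : E -> option 'I_r).

Definition matching F X f : Prop :=
  (forall x, x \in X -> exists j, f x = Some j /\ x \in F j) /\ {in X &, injective f}.

Definition meeting_idx F X : {set 'I_r} := [set j | ~~ [disjoint F j & X]].

Lemma matching_sub F X Y f : Y \subset X -> matching F X f -> matching F Y f.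
Proof.
move=> /subsetP YX [fX finj]; split=> [x /YX|x y /YX xX /YX yX]; first exact: fX.
exact: finj.
Qed.

Lemma ptrans_sub F X Y : Y \subset X -> ptrans F X -> ptrans F Y.
Proof. by move=> YX [f fX]; exists f; apply: matching_sub fX. Qed.

Lemma meeting_idxS F : {homo meeting_idx F : X Y / X \subset Y}.
Proof.
move=> X Y XY; apply/subsetP => j; rewrite !inE; apply: contra => FY.
exact: disjointWr FY.
Qed.

Lemma contained_idxC F X : contained_idx F (~: X) = ~: meeting_idx F X.
Proof. by apply/setP => j; rewrite !inE negbK subsets_disjoint setCK. Qed.

Lemma replace_at_neq F i B j : j != i -> replace_at F i B j = F j.
Proof. by rewrite /replace_at => /negbTE->. Qed.

Lemma meeting_idx_replace F i B X :
  meeting_idx (replace_at F i B) X =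
  if [disjoint B & X] then meeting_idx F X :\ i else i |: meeting_idx F X.
Proof.
apply/setP => j; rewrite /replace_at; case: ifP => BX; rewrite !inE;
  by case: eqP => [->|]; rewrite ?BX.
Qed.

Lemma ptrans_card_meeting F X : ptrans F X -> #|X| <= #|meeting_idx F X|.
Proof.
move=> [f [fX finj]]; rewrite -(card_in_imset finj).
rewrite -(card_imset (meeting_idx F X) (@Some_inj _)).
apply: subset_leq_card; apply/subsetP => _ /imsetP[x xX ->].
have [j [-> xFj]] := fX x xX; apply: imset_f; rewrite inE.
by apply/pred0Pn; exists x; rewrite /= xFj.
Qed.

Lemma matching_update F X z j h :
  matching F (X :\ z) h -> z \in F j -> {in X :\ z, forall w, h w != Some j} ->
  matching F X (fun w => if w == z then Some j else h w).
Proof.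
move=> [hX hinj] zFj hj; have XDz w : w \in X -> w != z -> w \in X :\ z.
  by move=> wX wz; rewrite in_setD1 wz.
split=> [w wX|w1 w2 w1X w2X]; first by case: eqVneq => [->|/(XDz w wX)/hX]; first exists j.
case: (eqVneq w1 z) => [->|w1z]; case: (eqVneq w2 z) => [->|w2z] //.
- by move=> hw2; have := hj w2 (XDz w2 w2X w2z); rewrite -hw2 eqxx.
- by move=> hw1; have := hj w1 (XDz w1 w1X w1z); rewrite hw1 eqxx.
- by apply: hinj; apply: XDz.
Qed.

Lemma ptrans_free_slot F G i X : (forall j, j != i -> F j \subset G j) ->
  ptrans F X -> ptrans G X \/ exists2 a, a \in X :&: F i & ptrans G (X :\ a).
Proof.
move=> FG [f [fX finj]].
have avoid (W : {set E}) :
    W \subset X -> {in W, forall x, f x != Some i} -> ptrans G W.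
  move=> /subsetP WX fWi; exists f; split=> [x xW|x y /WX xX /WX yX]; last exact: finj.
  have [j [fx xFj]] := fX x (WX x xW); exists j; split=> //.
  have ji : j != i by apply: contra_neq (fWi x xW); rewrite fx => ->.
  exact: subsetP (FG j ji) x xFj.
case: (pickP [pred a in X | f a == Some i]) => [a /andP[aX /eqP fa] | f_avoid].
  right; exists a; last first.
    apply: avoid (subD1set _ _) _ => x; rewrite in_setD1 => /andP[xa xX].
    by apply: contraNneq xa => fx; apply/eqP/finj; rewrite ?fx ?fa.
  by have [j [+ aFj]] := fX a aX; rewrite fa => -[->]; rewrite inE aX.
by left; apply: avoid => // x xX; have := f_avoid x; rewrite /= xX => /negbT.
Qed.

Section Augmenting.
Variables (F : 'I_r -> {set E}) (Y D : {set E}) (g : E -> option 'I_r).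
Hypothesis gY : matching F Y g.

(* The
   search keeps every element of the explored set S rerouted. *)
Definition rerouted S z : Prop :=
  exists2 d, d \in D & exists h, [/\ matching F ((d |: Y) :\ z) h,
    {in (d |: Y) :\ z, forall w, h w \in g @: Y} & {in Y :\: S, h =1 g}].

Definition explored S : Prop :=
  [/\ D \subset S, S \subset D :|: Y & {in S, forall z, rerouted S z}].

Lemma explored_init : explored D.
Proof.
split=> //; first exact: subsetUl.
move=> z zD; exists z => //; exists g.
have /subsetP zYY : (z |: Y) :\ z \subset Y.
  by apply/subsetP => w; rewrite !inE => /andP[/negbTE->].
by split=> [|w /zYY wY|//]; [apply: matching_sub gY; apply/subsetP | apply: imset_f].
Qed.

Lemma rerouted_grow S y z : rerouted S z -> rerouted (y |: S) z.
Proof.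
move=> [d dD [h [hm hval hg]]]; exists d => //; exists h; split=> // w.
by rewrite in_setD in_setU1 negb_or => /andP[/andP[_ wS] wY]; apply: hg; rewrite inE wS.
Qed.

Lemma rerouted_free S z j : rerouted S z -> z \in F j -> Some j \notin g @: Y ->
  exists2 d, d \in D & ptrans F (d |: Y).
Proof.
move=> [d dD [h [hm hval _]]] zFj jfree; exists d => //.
exists (fun w => if w == z then Some j else h w); apply: matching_update hm zFj _.
by move=> w /hval; apply: contraTneq => ->.
Qed.

Lemma rerouted_shift S z j y : z \in S -> rerouted S z -> z \in F j ->
  y \in Y :\: S -> g y = Some j -> rerouted (y |: S) y.
Proof.
move=> zS [d dD [h [hm hval hg]]] zFj yYS gy; exists d => //.
have [yz yY] : y != z /\ y \in Y.
  by move: yYS; rewrite inE => /andP[yS ->]; split=> //; apply: contraNneq yS => ->.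
have hy : h y = Some j by rewrite hg.
have dYyz : (d |: Y) :\ y :\ z \subset (d |: Y) :\ z by apply/setSD/subD1set.
exists (fun w => if w == z then Some j else h w); split.
- apply: matching_update zFj _; first exact: matching_sub dYyz hm.
  have ydz : y \in (d |: Y) :\ z by rewrite in_setD1 yz in_setU1 yY orbT.
  move=> w wYyz; rewrite -hy; apply: (contraTneq _ wYyz).
  by move=> /(hm.2 w y (subsetP dYyz w wYyz) ydz) ->; rewrite !inE eqxx andbF.
- move=> w; rewrite in_setD1 => /andP[_ wdY].
  by case: eqVneq => [_|wz]; [rewrite -gy imset_f | apply: hval; rewrite in_setD1 wz].
- move=> w; rewrite in_setD in_setU1 negb_or => /andP[/andP[_ wS] wY].
  have wz : w != z by apply: contraNneq wS => ->.
  by rewrite (negbTE wz) hg // inE wS.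
Qed.

Lemma explored_step S : explored S ->
  [\/ exists2 d, d \in D & ptrans F (d |: Y),
      #|meeting_idx F S| <= #|S :&: Y| |
      exists2 y, y \in Y :\: S & explored (y |: S)].
Proof.
move=> [DS SDY reS].
have [closed | ] :=
  boolP [forall z in S, forall j, (z \in F j) ==> (Some j \in g @: (S :&: Y))].
  apply: Or32; rewrite -(card_imset (meeting_idx F S) (@Some_inj _)).
  apply: leq_trans (leq_imset_card g _); apply: subset_leq_card.
  apply/subsetP => _ /imsetP[j /[!inE] /pred0Pn[z /andP[/= zFj zS]] ->].
  by move/forall_inP/(_ z zS)/forallP/(_ j): closed; rewrite zFj.
case/forall_inPn => z zS /forallPn[j]; rewrite negb_imply => /andP[zFj jS].
have [/imsetP[y yY gy] | jfree] := boolP (Some j \in g @: Y); last first.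
  by apply: Or31; apply: rerouted_free (reS z zS) zFj jfree.
have yYS : y \in Y :\: S.
  by rewrite inE yY andbT; apply: contra jS => yS; rewrite gy imset_f // inE yS.
apply: Or33; exists y => //; split.
- exact: subset_trans DS (subsetUr _ _).
- by rewrite subUset sub1set !inE (setDP yYS).1 orbT SDY.
- move=> w; rewrite in_setU1 => /predU1P[->|wS].
    exact: rerouted_shift zS (reS z zS) zFj yYS (esym gy).
  exact/rerouted_grow/reS.
Qed.

Lemma augment_or_deficient :
  (exists2 d, d \in D & ptrans F (d |: Y)) \/
  exists S, [/\ D \subset S, S \subset D :|: Y & #|meeting_idx F S| <= #|S :&: Y|].
Proof.
suff grow S : explored S -> (exists2 d, d \in D & ptrans F (d |: Y)) \/
    exists S, [/\ D \subset S, S \subset D :|: Y & #|meeting_idx F S| <= #|S :&: Y|].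
  exact/grow/explored_init.
have [n] := ubnP #|Y :\: S|; elim: n S => // n IH S ltSn exS.
case: (explored_step exS) => [aug | deficient | [y yYS exyS]]; first by left.
  by right; exists S; case: exS.
apply: IH exyS; rewrite -ltnS; apply: leq_trans ltSn; rewrite ltnS; apply: proper_card.
by rewrite setUC -setDDl properD1.
Qed.

End Augmenting.

Lemma ptransU1_or_deficient F Y a : ptrans F Y ->
  ptrans F (a |: Y) \/
  exists S, [/\ a \in S, S \subset a |: Y & #|meeting_idx F S| < #|S|].
Proof.
move=> [g gY]; have [aY | aY] := boolP (a \in Y).
  by left; rewrite (setUidPr _) ?sub1set //; exists g.
have [[d /set1P-> ?] | [S [aS SaY NS]]] := augment_or_deficient [set a] gY.
  by left.
right; exists S; split=> //; first by rewrite -sub1set.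
apply: leq_ltn_trans NS _; apply: proper_card; rewrite properE subsetIl.
by apply/subsetPn; exists a; [rewrite -sub1set | rewrite inE (negbTE aY) andbF].
Qed.

Lemma ptrans_augment F P Q : ptrans F P -> ptrans F Q -> #|Q| < #|P| ->
  exists2 x, x \in P :\: Q & ptrans F (x |: Q).
Proof.
move=> PF [g gQ] ltQP; have [//|[S [PQS _ NS]]] := augment_or_deficient (P :\: Q) gQ.
have PS_le : #|P :&: S| <= #|S :&: Q|.
  apply: leq_trans (ptrans_card_meeting (ptrans_sub (subsetIl P S) PF)) _.
  exact: leq_trans (subset_leq_card (meeting_idxS F (subsetIr P S))) NS.
have PQ : P :\: S \subset Q :\: S.
  apply/subsetP => x; rewrite !inE => /andP[xS xP]; rewrite xS.
  by apply: contraNT xS => xQ; rewrite (subsetP PQS) // inE xQ.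
have := subset_leq_card PQ; rewrite -(cardsID S P) -(cardsID S Q) setIC in ltQP.
lia.
Qed.

Lemma is_presentation_sub indep F : is_presentation indep F ->
  forall X Y, Y \subset X -> indep X -> indep Y.
Proof. by move=> pres X Y YX /pres/(ptrans_sub YX)/pres. Qed.

Lemma is_presentation_augment indep F : is_presentation indep F ->
  forall P Q, indep P -> indep Q -> #|Q| < #|P| ->
  exists2 x, x \in P :\: Q & indep (x |: Q).
Proof.
move=> pres P Q /pres PF /pres QF /(ptrans_augment PF QF)[x xPQ /pres].
by exists x.
Qed.

Lemma is_presentation_mrankT indep F : is_presentation indep F ->
  mrank indep setT <= r.
Proof.
move=> pres; apply: mrank_le => Y _ /pres/ptrans_card_meeting/leq_trans; apply.
by apply: leq_trans (max_card _) _; rewrite card_ord.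
Qed.

End Transversal.

Section ReplaceMember.
Variables (E : finType) (indep : pred {set E}) (r : nat).
Variables (A : 'I_r -> {set E}) (i : 'I_r) (Bi : {set E}).
Hypothesis pres : is_presentation indep A.

Local Notation A' := (replace_at A i Bi).
Let indep_sub := is_presentation_sub pres.
Let indep_augment := is_presentation_augment pres.

Section Exchange.
Hypothesis exchange : forall B : {set E}, Bi \subset B -> ~~ (A i \subset B) ->
  dual_rank indep B + #|contained_idx A B| < #|B|.

Lemma indep_card_meeting_replace Z : indep Z -> #|Z| <= #|meeting_idx A' Z|.
Proof.
move=> iZ; have ZN := ptrans_card_meeting ((pres Z).1 iZ).
rewrite meeting_idx_replace; case: ifPn => [BZ | _]; last first.
  exact: leq_trans ZN (subset_leq_card (subsetUr _ _)).
have [iN | iN] := boolP (i \in meeting_idx A Z); last first.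
  by rewrite (cardsD1 i) (negbTE iN) add0n in ZN.
suff ltZN : #|Z| < #|meeting_idx A Z| by rewrite (cardsD1 i) iN add1n ltnS in ltZN.
have BZc : Bi \subset ~: Z by rewrite subsets_disjoint setCK.
have AZc : ~~ (A i \subset ~: Z) by move: iN; rewrite inE subsets_disjoint setCK.
have := exchange BZc AZc; rewrite /dual_rank setCK contained_idxC.
have := cardsC (meeting_idx A Z); rewrite card_ord.
have := mrank_ge (subxx Z) iZ; have := is_presentation_mrankT pres.
have := mrankT_le indep_sub (~: Z); rewrite setCK.
lia.
Qed.

Lemma ptrans_replace_of_indep X : indep X -> ptrans A' X.
Proof.
move=> iX; have AA' j : j != i -> A j \subset A' j by move/replace_at_neq->.
have [//|[a /setIP[aX _] Xa]] := ptrans_free_slot AA' ((pres X).1 iX).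
have [|[S [_ SX NS]]] := ptransU1_or_deficient a Xa; first by rewrite setD1K.
rewrite setD1K // in SX.
by have := indep_card_meeting_replace (indep_sub SX iX); rewrite leqNgt NS.
Qed.

End Exchange.

Hypothesis same_dual_cl : dual_cl indep Bi = dual_cl indep (A i).

Lemma indep_of_ptrans_replace X : ptrans A' X -> indep X.
Proof.
move=> XA'; apply/pres; have A'A j : j != i -> A' j \subset A j by move/replace_at_neq->.
have [//|[b /setIP[bX bBi] Xb]] := ptrans_free_slot A'A XA'.
rewrite /replace_at eqxx in bBi.
have [|[S [bS SX NS]]] := ptransU1_or_deficient b Xb; first by rewrite setD1K.
rewrite setD1K // in SX; exfalso.
have depS : ~~ indep S by apply/negP => /pres/ptrans_card_meeting; rewrite leqNgt NS.
have AiS : [disjoint A i & S].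
  have SN := ptrans_card_meeting (ptrans_sub SX XA').
  have BS : ~~ [disjoint Bi & S] by apply/negP => /disjointFr/(_ bBi); rewrite bS.
  rewrite meeting_idx_replace (negbTE BS) cardsU1 in SN.
  have : i \notin meeting_idx A S.
    by apply: contraTN NS => iN; rewrite -leqNgt; rewrite iN in SN.
  by rewrite inE negbK.
have bAi : b \notin A i by rewrite (disjointFl AiS bS).
have bcl : b \in dual_cl indep (A i) by rewrite -same_dual_cl (subsetP (sub_dual_cl _ _)).
have SAi : S \subset ~: A i by rewrite subsets_disjoint setCK disjoint_sym.
have iSb : indep (S :\ b) by apply/pres; apply: ptrans_sub Xb; apply: setSD.
have := dual_cl_mrankD1 indep_sub bAi bcl.
by rewrite ltnNge (mrank_D1_spanned indep_sub indep_augment iSb (setSD _ SAi)) ?setD1K.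
Qed.

End ReplaceMember.

Theorem lemma2p7 (E : finType) (indep : pred {set E}) (r : nat)
  (A : 'I_r -> {set E}) (i : 'I_r) (Bi : {set E}) :
  is_presentation indep A ->
  dual_cl indep Bi = dual_cl indep (A i) ->
  (forall B : {set E}, Bi \subset B -> ~~ (A i \subset B) ->
     dual_rank indep B + #|contained_idx A B| < #|B|) ->
  is_presentation indep (replace_at A i Bi).
Proof.
move=> pres same_cl exchange X; split.
- exact: ptrans_replace_of_indep pres exchange X.
- exact: indep_of_ptrans_replace pres same_cl X.
Qed.
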